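(* The identity matrix $\mathbb{1}_N$ (the barycenter of the set $\mathcal I$ of Ising matrices) is a fixed point of every affine bijection $\sigma:\mathcal{G}_N\to\mathcal{G}_N$.
   Context: $\mathcal{G}_N$ is the set of real symmetric positive semi-definite $N\times N$ matrices with unit diagonal; $\mathcal{I}$ is the set of matrices $\mathbf{s}\mathbf{s}^\top$ with $\mathbf{s}\in\{\pm1\}^N$. *)

From mathcomp Require Import all_boot all_order all_algebra.
From mathcomp Require Import reals.
Set Implicit Arguments. Unset Strict Implicit. Unset Printing Implicit Defensive.
Import Order.TTheory GRing.Theory Num.Theory.
Local Open Scope ring_scope.

Definition psd (R : realType) (N : nat) (A : 'M[R]_N) : Prop :=
  forall x : 'cV[R]_N, 0 <= (x^T *m A *m x) 0 0.

Definition elliptope (R : realType) (N : nat) (A : 'M[R]_N) : Prop :=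
  A^T = A /\ psd A /\ (forall i : 'I_N, A i i = 1).

Definition ising (R : realType) (N : nat) (A : 'M[R]_N) : Prop :=
  exists s : 'cV[R]_N, (forall i, s i 0 = 1 \/ s i 0 = -1) /\ A = s *m s^T.

(* sigma : G_N -> G_N is an affine bijection (represented as a function on
   all matrices, whose restriction to G_N is considered). *)
Definition affine_bijection_on_elliptope (R : realType) (N : nat)
  (sigma : 'M[R]_N -> 'M[R]_N) : Prop :=
  (forall A, elliptope A -> elliptope (sigma A)) /\
  (forall A B, elliptope A -> elliptope B -> sigma A = sigma B -> A = B) /\
  (forall B, elliptope B -> exists2 A, elliptope A & sigma A = B) /\
  (forall A B (t : R), elliptope A -> elliptope B -> 0 <= t -> t <= 1 ->
     sigma (t *: A + (1 - t) *: B) = t *: sigma A + (1 - t) *: sigma B).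

(* Call A a t-center of G_N if every B in G_N is the endpoint of a segment
   through A, A = t C + (1 - t) B with C in G_N.  An affine bijection of G_N
   maps t-centers to t-centers.  For t = 1 - 1/N the identity is a t-center,
   because B <= N 1 for every B in G_N.  Conversely, if A is a t-center, testing
   it against the Ising matrices s s^T gives s^T A s >= N for every sign
   vector s; the average of s^T A s over all s is tr A = N, so equality holds,
   the corresponding C satisfies C s = 0, hence A s = s for every sign vector
   and A = 1. *)
From mathcomp Require Import all_boot all_order all_algebra.
From mathcomp Require Import reals ring lra zify.
Set Implicit Arguments. Unset Strict Implicit. Unset Printing Implicit Defensive.
Import Order.TTheory GRing.Theory Num.Theory.
Local Open Scope ring_scope.

Section BilinearForm.
Variables (R : realType) (N : nat).
Implicit Types (M : 'M[R]_N) (x y z s : 'cV[R]_N).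

Definition bform M x y := (x^T *m M *m y) 0 0.

Lemma bformE M x y : bform M x y = \sum_k \sum_l x k 0 * M k l * y l 0.
Proof.
rewrite /bform mxE exchange_big; apply: eq_bigr => l _.
by rewrite mxE mulr_suml; apply: eq_bigr => k _; rewrite !mxE.
Qed.

Lemma bformDl M x y z : bform M (x + y) z = bform M x z + bform M y z.
Proof. by rewrite /bform linearD /= !mulmxDl mxE. Qed.

Lemma bformZl M a x y : bform M (a *: x) y = a * bform M x y.
Proof. by rewrite /bform linearZ /= -!scalemxAl mxE. Qed.

Lemma bformDr M x y z : bform M z (x + y) = bform M z x + bform M z y.
Proof. by rewrite /bform !mulmxDr mxE. Qed.

Lemma bformZr M a x y : bform M y (a *: x) = a * bform M y x.
Proof. by rewrite /bform -!scalemxAr mxE. Qed.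

Lemma bformDm M1 M2 x y : bform (M1 + M2) x y = bform M1 x y + bform M2 x y.
Proof. by rewrite /bform mulmxDr mulmxDl mxE. Qed.

Lemma bformZm a M x y : bform (a *: M) x y = a * bform M x y.
Proof. by rewrite /bform -scalemxAr -scalemxAl mxE. Qed.

Lemma bformNm M x y : bform (- M) x y = - bform M x y.
Proof. by rewrite -scaleN1r bformZm mulN1r. Qed.

Lemma bform_deltal M k y : bform M (delta_mx k 0) y = (M *m y) k 0.
Proof. by rewrite /bform trmx_delta -mulmxA -rowE !mxE. Qed.

Lemma bform_delta M k l : bform M (delta_mx k 0) (delta_mx l 0) = M k l.
Proof. by rewrite bform_deltal -colE mxE. Qed.

Lemma bform_sym M x y : M^T = M -> bform M x y = bform M y x.
Proof.
move=> MT; rewrite !bformE exchange_big; apply: eq_bigr => k _.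
by apply: eq_bigr => l _; rewrite -{1}MT mxE; ring.
Qed.

Lemma bform_rank1 s x y :
  bform (s *m s^T) x y = (x^T *m s) 0 0 * (s^T *m y) 0 0.
Proof. by rewrite /bform !mulmxA -(mulmxA _ _ y) [in LHS]mxE big_ord1. Qed.

Lemma bform1 x : bform 1%:M x x = \sum_k x k 0 ^+ 2.
Proof.
by rewrite /bform mulmx1 mxE; apply: eq_bigr => k _; rewrite mxE expr2.
Qed.

(* Discriminant argument: u |-> (x + u y)^T M (x + u y) is >= 0 and vanishes
   at u = 0, so its linear coefficient 2 y^T M x must vanish. *)
Lemma psd_bform0_ker M x : M^T = M -> psd M -> bform M x x = 0 -> M *m x = 0.
Proof.
move=> MT Mpsd Mx0; apply/matrixP => k i; rewrite ord1 [RHS]mxE -bform_deltal.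
set y := delta_mx k 0; set b := bform M y x; set c := bform M y y.
have c_ge0 : 0 <= c by exact: Mpsd.
have quad_ge0 u : 0 <= 2 * u * b + u ^+ 2 * c.
  have := Mpsd (x + u *: y); rewrite -/(bform _ _ _).
  by rewrite bformDl !bformDr !bformZl !bformZr Mx0 (bform_sym _ _ MT) -/b -/c; nra.
have c1_gt0 : 0 < c + 1 by lra.
set u := - b / (c + 1).
have u_def : u * (c + 1) = - b by rewrite divfK // gt_eqF.
by have := quad_ge0 u; nra.
Qed.

End BilinearForm.

Section Elliptope.
Variables (R : realType) (N : nat).
Implicit Types (A B : 'M[R]_N) (x s : 'cV[R]_N).

Lemma elliptope1 : elliptope (1%:M : 'M[R]_N).
Proof.
split; first by rewrite trmx1.
split; last by move=> i; rewrite mxE eqxx.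
by move=> x; rewrite -/(bform _ _ _) bform1; apply: sumr_ge0 => k _; apply: sqr_ge0.
Qed.

Lemma elliptope_le1_eq1 A : (N <= 1)%N -> elliptope A -> A = 1%:M.
Proof.
move=> N_le1 [_ [_ Adiag]]; apply/matrixP => i j.
have -> : j = i by apply/val_inj => /=; have := ltn_ord i; have := ltn_ord j; lia.
by rewrite Adiag mxE eqxx.
Qed.

Lemma elliptope_rank1 s : (forall k, s k 0 ^+ 2 = 1) -> elliptope (s *m s^T).
Proof.
move=> s_sqr; split; [|split].
- by rewrite trmx_mul trmxK.
- move=> x; rewrite -/(bform _ _ _) bform_rank1.
  by rewrite -[x^T *m s]trmxK trmx_mul trmxK [X in X * _]mxE -expr2 sqr_ge0.
- by move=> i; rewrite mxE big_ord1 mxE -expr2 s_sqr.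
Qed.

Lemma elliptope_entry_le B k l x : elliptope B ->
  2 * (x k 0 * B k l * x l 0) <= x k 0 ^+ 2 + x l 0 ^+ 2.
Proof.
move=> [BT [Bpsd Bdiag]].
have Bsym : B l k = B k l by rewrite -{1}BT mxE.
have := Bpsd (x l 0 *: delta_mx k 0 - x k 0 *: delta_mx l 0).
rewrite -/(bform _ _ _) bformDl !bformDr -!scaleN1r !bformZl !bformZr.
by rewrite !bform_delta Bsym !Bdiag; nra.
Qed.

Lemma elliptope_bform_le B x : elliptope B -> bform B x x <= N%:R * bform 1%:M x x.
Proof.
move=> GB; rewrite bformE bform1.
have sum_pairs : \sum_k \sum_l (x k 0 ^+ 2 + x l 0 ^+ 2)
    = 2 * (N%:R * \sum_k x k 0 ^+ 2).
  under eq_bigr do rewrite big_split sumr_const card_ord /=.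
  rewrite big_split /= sumr_const card_ord sumrMnl.
  by rewrite -(mulr_natr (\sum_k x k 0 ^+ 2)); ring.
have : 2 * (\sum_k \sum_l x k 0 * B k l * x l 0)
    <= \sum_k \sum_l (x k 0 ^+ 2 + x l 0 ^+ 2).
  rewrite mulr_sumr; apply: ler_sum => k _.
  by rewrite mulr_sumr; apply: ler_sum => l _; apply: elliptope_entry_le.
by rewrite sum_pairs; lra.
Qed.

End Elliptope.

Section SignVectors.
Variables (R : realType) (N : nat).
Implicit Types (A : 'M[R]_N) (f : {ffun 'I_N -> bool}).

Definition sign_col f : 'cV[R]_N := \col_m (if f m then -1 else 1).

Definition flip_sign (i : 'I_N) f : {ffun 'I_N -> bool} :=
  [ffun m => if m == i then ~~ f m else f m].

Lemma flip_signK i : involutive (flip_sign i).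
Proof.
by move=> f; apply/ffunP => m; rewrite !ffunE; case: eqP => // _; rewrite negbK.
Qed.

Lemma sign_col_sqr f k : sign_col f k 0 ^+ 2 = 1.
Proof. by rewrite mxE; case: (f k); rewrite ?sqrrN expr1n. Qed.

Lemma sign_col_dot f : (sign_col f)^T *m sign_col f = (N%:R : R)%:M.
Proof.
apply/matrixP => i j; rewrite !ord1 !mxE /= mulr1n.
under eq_bigr do rewrite mxE -expr2 sign_col_sqr.
by rewrite sumr_const card_ord.
Qed.

Local Notation nsigns := (#|{: {ffun 'I_N -> bool}}|%:R : R).

(* Off the diagonal, flipping the sign at k pairs each term with its opposite. *)
Lemma sum_sign_col_mul k l :
  \sum_f sign_col f k 0 * sign_col f l 0 = (k == l)%:R * nsigns.
Proof.
have [<-|neq_kl] := eqVneq k l.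
  by under eq_bigr do rewrite -expr2 sign_col_sqr; rewrite sumr_const mul1r.
rewrite mul0r; set S := (X in X = 0).
suff : S = - S by lra.
rewrite /S {1}(reindex_inj (can_inj (flip_signK k))) -sumrN.
apply: eq_bigr => f _; rewrite !mxE !ffunE eqxx eq_sym (negbTE neq_kl).
by case: (f k); case: (f l) => /=; ring.
Qed.

Lemma sum_bform_sign_col A : (forall i, A i i = 1) ->
  \sum_f bform A (sign_col f) (sign_col f) = nsigns * N%:R.
Proof.
move=> Adiag; under eq_bigr do rewrite bformE.
rewrite exchange_big (eq_bigr (fun=> nsigns)) ?sumr_const ?card_ord ?mulr_natr //.
move=> k _; rewrite exchange_big (eq_bigr (fun l => A k l * ((k == l)%:R * nsigns))).
  rewrite (bigD1 k) //= eqxx Adiag !mul1r big1 ?addr0 // => l neq_lk.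
  by rewrite eq_sym (negbTE neq_lk) mul0r mulr0.
by move=> l _; rewrite -sum_sign_col_mul mulr_sumr; apply: eq_bigr => f _; ring.
Qed.

(* The average of these terms over all sign vectors is tr A = N. *)
Lemma sign_col_bform_eq A : (forall i, A i i = 1) ->
  (forall f, N%:R <= bform A (sign_col f) (sign_col f)) ->
  forall f, bform A (sign_col f) (sign_col f) = N%:R.
Proof.
move=> Adiag bform_ge f.
have ge0 g : true -> 0 <= bform A (sign_col g) (sign_col g) - N%:R.
  by rewrite subr_ge0.
have sum0 : \sum_g (bform A (sign_col g) (sign_col g) - N%:R) = 0.
  by rewrite sumrB sum_bform_sign_col // sumr_const mulr_natl subrr.
by have /(_ f isT) := psumr_eq0P ge0 sum0; lra.
Qed.

(* Test A against the all-ones vector and against the vector flipped at i. *)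
Lemma sign_col_fixed_eq1 A : (forall f, A *m sign_col f = sign_col f) -> A = 1%:M.
Proof.
move=> A_fix; apply/matrixP => k i.
pose f0 : {ffun 'I_N -> bool} := [ffun=> false].
have e0 m : sign_col f0 m 0 = 1 by rewrite mxE ffunE.
have ei m : sign_col (flip_sign i f0) m 0 = 1 - 2 * (m == i)%:R.
  by rewrite mxE !ffunE; case: eqP => _ /=; ring.
have row_sum : \sum_l A k l = 1.
  have := congr1 (fun M : 'cV[R]_N => M k 0) (A_fix f0); rewrite [LHS]mxE e0.
  by under eq_bigr do rewrite e0 mulr1.
have := congr1 (fun M : 'cV[R]_N => M k 0) (A_fix (flip_sign i f0)).
rewrite [LHS]mxE ei; under eq_bigr do rewrite ei mulrBr mulr1 mulrCA.
rewrite sumrB row_sum -mulr_sumr (bigD1 i) //= eqxx mulr1 big1 ?addr0.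
  by rewrite mxE; case: eqP => _ /=; lra.
by move=> l /negbTE->; rewrite !mulr0.
Qed.

End SignVectors.

Section Center.
Variables (R : realType) (N : nat).
Implicit Types (A B C : 'M[R]_N) (t : R).

Definition elliptope_center t A :=
  forall B, elliptope B -> exists2 C, elliptope C & A = t *: C + (1 - t) *: B.

Lemma affine_bijection_center (sigma : 'M[R]_N -> 'M[R]_N) t A :
  affine_bijection_on_elliptope sigma -> 0 <= t <= 1 ->
  elliptope_center t A -> elliptope_center t (sigma A).
Proof.
move=> [sigmaG [_ [sigma_onto sigma_affine]]] /andP[t_ge0 t_le1] cA B' GB'.
have [B GB <-] := sigma_onto _ GB'.
have [C GC ->] := cA B GB.
by exists (sigma C); [apply: sigmaG | apply: sigma_affine].
Qed.

Hypothesis N_gt1 : (1 < N)%N.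

Let n : R := N%:R.
Local Notation t := (1 - n^-1).

Let n_gt1 : 1 < n. Proof. by rewrite /n ltr1n. Qed.
Let n_neq0 : n != 0. Proof. by rewrite gt_eqF // (lt_trans ltr01 n_gt1). Qed.
Let t_gt0 : 0 < t. Proof. by rewrite subr_gt0 invf_lt1 // (lt_trans ltr01 n_gt1). Qed.
Let t_le1 : t <= 1. Proof. by rewrite lerBlDr lerDl invr_ge0 ler0n. Qed.

Lemma elliptope_center1 : elliptope_center t 1%:M.
Proof.
move=> B [BT [Bpsd Bdiag]].
have n1_neq0 : n - 1 != 0 by rewrite subr_eq0 gt_eqF.
exists ((n - 1)^-1 *: (n *: 1%:M - B)); last first.
  by apply/matrixP => i j; rewrite !mxE; field; apply/andP.
split; [|split].
- by apply/matrixP => i j; rewrite !mxE -{1}BT mxE eq_sym.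
- move=> x; rewrite -/(bform _ _ _) bformZm bformDm bformNm bformZm.
  apply: mulr_ge0; first by rewrite invr_ge0 subr_ge0 ltW.
  by rewrite subr_ge0; apply: elliptope_bform_le.
- by move=> i; rewrite !mxE eqxx Bdiag mulr1 mulVf.
Qed.

Lemma affine_bijection_center1 (sigma : 'M[R]_N -> 'M[R]_N) :
  affine_bijection_on_elliptope sigma -> elliptope_center t (sigma 1%:M).
Proof.
move=> sigma_aff; apply: affine_bijection_center => //.
- by rewrite (ltW t_gt0) t_le1.
- exact: elliptope_center1.
Qed.

Lemma elliptope_center_eq1 A : elliptope A -> elliptope_center t A -> A = 1%:M.
Proof.
move=> [_ [_ Adiag]] cA.
pose s f : 'cV[R]_N := sign_col R f.
have cA_s f := cA _ (elliptope_rank1 (sign_col_sqr R f)).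
have bformA_s f C : A = t *: C + (1 - t) *: (s f *m (s f)^T) ->
    bform A (s f) (s f) = t * bform C (s f) (s f) + n.
  move=> ->; rewrite bformDm !bformZm bform_rank1 sign_col_dot mxE eqxx.
  by rewrite -/n mulr1n subKr mulKf.
have bformA_eq : forall f, bform A (s f) (s f) = n.
  apply: sign_col_bform_eq => // f.
  have [C [_ [Cpsd _]] /bformA_s->] := cA_s f.
  by rewrite lerDr mulr_ge0 ?(ltW t_gt0) //; apply: Cpsd.
apply: sign_col_fixed_eq1 => f.
have [C [CT [Cpsd _]] EA] := cA_s f.
have Cs0 : C *m s f = 0.
  apply: psd_bform0_ker => //.
  apply: (mulfI (lt0r_neq0 t_gt0)); rewrite mulr0.
  by have := bformA_eq f; rewrite (bformA_s f C EA); lra.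
rewrite EA mulmxDl -!scalemxAl Cs0 scaler0 add0r -mulmxA sign_col_dot.
by rewrite mul_mx_scalar scalerA -/n subKr mulVf ?scale1r.
Qed.

End Center.

Theorem lemma6 (R : realType) (N : nat) (sigma : 'M[R]_N -> 'M[R]_N) :
  affine_bijection_on_elliptope sigma -> sigma 1%:M = 1%:M.
Proof.
move=> sigma_aff; have sigma1G := sigma_aff.1 _ (elliptope1 R N).
have [N_le1|N_gt1] := leqP N 1; first exact: elliptope_le1_eq1.
exact: elliptope_center_eq1 sigma1G (affine_bijection_center1 N_gt1 sigma_aff).
Qed.
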